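(* Let $x,t$ be formal variables. Then, as formal power series in $t$ with coefficients polynomial in $x$, $$\sum_{n\ge 1}\sum_{[\pi]\in\mathfrak{C}_n^o}x^{\operatorname{drop}_{oo}([\pi])}t^n = \sum_{m\ge 1}\frac{m!(m-1)!\,t^{2m}}{\prod_{k=1}^m \big(1+k^2(1-x)t^2\big)}+\sum_{m\ge 1}\frac{\big((m-1)!\big)^2t^{2m-1}}{\prod_{k=1}^m \big(1+k^2(1-x)t^2\big)}.$$
   Context: For $n\ge1$, a cycle on $[n]=\{1,\dots,n\}$ is an equivalence class $[\pi]$ of permutations $\pi=\pi_1\cdots\pi_n$ of $[n]$ (in one-line notation) under cyclic rotation of the entries; the set of cycles on $[n]$ is $\mathfrak{C}_n$. Each cycle is represented by the permutation $\pi$ with $\pi_1=1$, and indices are read modulo $n$ (so $\pi_{n+1}=\pi_1$). A drop of $[\pi]$ is a consecutive pair $(\pi_i,\pi_{i+1})$, $1\le i\le n$, with $\pi_i>\pi_{i+1}$; drops do not depend on the choice of rotation. By convention, the unique cycle $[(1)]\in\mathfrak{C}_1$ has exactly one drop $(\star,1)$, where $\star$ is considered neither even nor odd. A drop $(a,b)$ is odd-odd if $a$ and $b$ are both odd, and even-odd if $a$ is even and $b$ is odd. $\operatorname{drop}_{oo}([\pi])$ and $\operatorname{drop}_{eo}([\pi])$ denote the numbers of odd-odd and even-odd drops of $[\pi]$, respectively. Finally $\mathfrak{C}_n^o$ is the set of cycles $[\pi]\in\mathfrak{C}_n$ such that for every drop $(\pi_i,\pi_{i+1})$ of $[\pi]$,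 the entry $\pi_{i+1}$ is odd. *)

From mathcomp Require Import all_boot all_order all_algebra.
Set Implicit Arguments. Unset Strict Implicit. Unset Printing Implicit Defensive.
Import GRing.Theory.
Local Open Scope ring_scope.

Definition fps (R : Type) := nat -> R.

Definition fps_of_poly (R : nzRingType) (p : {poly R}) : fps R := fun n => p`_n.

Definition fps_mul (R : nzRingType) (f g : fps R) : fps R :=
  fun n => \sum_(i < n.+1) f i * g (n - i)%N.

(* first n+1 coefficients of the multiplicative inverse of f
   (f 0 assumed to be a unit) *)
Fixpoint fps_inv_seq (R : unitRingType) (f : fps R) (n : nat) : seq R :=
  match n with
  | 0 => [:: (f 0%N)^-1]
  | n'.+1 => let s := fps_inv_seq f n' in
      rcons s (- (f 0%N)^-1 * \sum_(i < n'.+1) f (n'.+1 - i)%N * nth 0 s i)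
  end.

Definition fps_inv (R : unitRingType) (f : fps R) : fps R :=
  fun n => nth 0 (fps_inv_seq f n) n.

(* Sum of a family (F m)_{m >= 1} of power series in which F m has
   t-adic valuation >= m (so the family is summable): the coefficient of
   t^n only receives contributions from 1 <= m <= n. *)
Definition fps_sum1 (R : nzRingType) (F : nat -> fps R) : fps R :=
  fun n => \sum_(1 <= m < n.+1) F m n.

(* A cycle [pi] on [n] is represented by its one-line notation s with s_1 = 1. *)
Definition cycles (n : nat) : seq (seq nat) :=
  [seq s <- permutations (iota 1 n) | head 0%N s == 1%N].

Definition cyc_pairs (s : seq nat) : seq (nat * nat) := zip s (rot 1 s).

Definition drops (s : seq nat) : seq (nat * nat) :=
  [seq p <- cyc_pairs s | (p.2 < p.1)%N].

Definition in_Co (s : seq nat) : bool := all (fun p => odd p.2) (drops s).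

Definition drop_oo (s : seq nat) : nat :=
  count (fun p => odd p.1 && odd p.2) (drops s).

Definition lhs_series : fps {poly int} :=
  fun n => if (0 < n)%N then \sum_(s <- cycles n | in_Co s) 'X^(drop_oo s) else 0.

Definition denom (m : nat) : {poly {poly int}} :=
  \prod_(1 <= k < m.+1) (1 + ((k ^ 2)%:R * (1 - 'X))%:P * 'X^2).

Definition term1 (m : nat) : fps {poly int} :=
  fps_mul (fps_of_poly ((m`! * (m.-1)`!)%N%:R%:P * 'X^(2 * m)))
          (fps_inv (fps_of_poly (denom m))).

Definition term2 (m : nat) : fps {poly int} :=
  fps_mul (fps_of_poly (((m.-1)`! ^ 2)%N%:R%:P * 'X^((2 * m).-1)))
          (fps_inv (fps_of_poly (denom m))).

Definition rhs_series : fps {poly int} :=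
  fun n => fps_sum1 term1 n + fps_sum1 term2 n.

From mathcomp Require Import all_boot all_order all_algebra.
From mathcomp Require Import zify ring.
Set Implicit Arguments. Unset Strict Implicit. Unset Printing Implicit Defensive.
Import GRing.Theory.
Local Open Scope ring_scope.

(* Both sides L_n satisfy L_1 = 1 and, for n >= 1,
     L_(n+1) = x^[n+1 odd] * (ceil(n/2) L_n + (1 - x) L_n').
   Left side: every cycle on [n+1] arises exactly once by inserting n+1 into one of the n gaps
   of a cycle on [n].  Inserting it before an even entry b creates the forbidden drop (n+1, b).
   Inserting it before one of the ceil(n/2) odd entries b, after a, creates the drop (n+1, b),
   odd-odd iff n+1 is odd, and destroys the pair (a, b); the latter was an odd-odd drop for
   exactly drop_oo of these gaps, which accounts for the derivative.
   Right side: 1 / prod_(k<=m) (1 + k^2 (1-x) t^2) = sum_j T(m+j, m) (x-1)^j t^(2j), where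
   T = central_fact are central factorial numbers, so both parity classes of coefficients are
   sums over m of factorial weights times T(N, m) (x-1)^(N-m), and the recurrence of T turns
   the step above into a termwise identity. *)

(** * Power series and the recurrence operator *)

Section PowerSeriesInverse.
Variable R : comUnitRingType.
Implicit Types f g : fps R.

Lemma size_fps_inv_seq f n : size (fps_inv_seq f n) = n.+1.
Proof. by elim: n => //= n IHn; rewrite size_rcons IHn. Qed.

Lemma nth_fps_inv_seq f n i : (i <= n)%N -> nth 0 (fps_inv_seq f n) i = fps_inv f i.
Proof.
elim: n => [|n IHn]; first by rewrite leqn0 => /eqP ->.
rewrite leq_eqVlt => /predU1P [-> //|lt_in].
by rewrite /= nth_rcons size_fps_inv_seq lt_in IHn.
Qed.

Lemma fps_invS f n :
  fps_inv f n.+1 = - (f 0%N)^-1 * \sum_(i < n.+1) f (n.+1 - i)%N * fps_inv f i.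
Proof.
rewrite {1}/fps_inv /= nth_rcons size_fps_inv_seq ltnn eqxx.
by congr (_ * _); apply: eq_bigr => i _; rewrite nth_fps_inv_seq // -ltnS.
Qed.

Lemma fps_inv_unique f g : f 0%N = 1 ->
  (forall n, fps_mul g f n = (n == 0)%:R) -> fps_inv f =1 g.
Proof.
move=> f0 gf1; elim/ltn_ind => -[_ | n IHn].
  by have := gf1 0%N; rewrite /fps_mul big_ord1 f0 mulr1 /fps_inv /= f0 invr1.
have /eqP := gf1 n.+1; rewrite /fps_mul big_ord_recr /= subnn f0 mulr1.
rewrite addrC addr_eq0 => /eqP ->; rewrite fps_invS f0 invr1 mulN1r.
by congr (- _); apply: eq_bigr => i _; rewrite IHn // mulrC.
Qed.

End PowerSeriesInverse.

Lemma fps_mul_polyE (R : nzRingType) (g : fps R) (p : {poly R}) n N : (n <= N)%N ->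
  fps_mul g (fps_of_poly p) n = (\poly_(i < N.+1) g i * p)`_n.
Proof.
move=> le_nN; rewrite coefM; apply: eq_bigr => i _.
by rewrite coef_poly ltnS (leq_trans _ le_nN) // -ltnS.
Qed.

Lemma coefMl_eq (R : nzRingType) (a b p : {poly R}) n :
  (forall i, (i <= n)%N -> a`_i = b`_i) -> (a * p)`_n = (b * p)`_n.
Proof. by move=> eq_ab; rewrite !coefM; apply: eq_bigr => i _; rewrite eq_ab // -ltnS. Qed.

Lemma fps_mul_monomial (R : nzRingType) (c : R) k (g : fps R) n :
  fps_mul (fps_of_poly (c%:P * 'X^k)) g n = if (n < k)%N then 0 else c * g (n - k)%N.
Proof.
rewrite /fps_mul /fps_of_poly.
rewrite (eq_bigr (fun i : 'I_n.+1 => (i == k :> nat)%:R * (c * g (n - i)%N))); last first.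
  by move=> i _; rewrite coefCM coefXn mulrA; case: eqP; rewrite ?mulr0 ?mul0r ?mulr1 ?mul1r.
case: ltnP => [lt_nk | le_kn].
  by rewrite big1 // => i _; rewrite ltn_eqF ?mul0r // (leq_trans (ltn_ord i) lt_nk).
rewrite (bigD1 (Ordinal (leq_ltn_trans le_kn (ltnSn n)))) //= eqxx mul1r big1 ?addr0 // => i.
by rewrite -val_eqE /= => /negbTE ->; rewrite mul0r.
Qed.

Lemma fps_sum1E (R : nzRingType) (F : nat -> fps R) n : fps_sum1 F n = \sum_(m < n) F m.+1 n.
Proof. by rewrite /fps_sum1 big_add1 big_mkord. Qed.

Section InsertionOperator.
Variable R : comNzRingType.

Definition insertion_op (k : nat) (p : {poly R}) : {poly R} := k%:R * p + (1 - 'X) * p^`().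

Lemma insertion_op_sum (I : Type) (r : seq I) (F : I -> {poly R}) k :
  insertion_op k (\sum_(i <- r) F i) = \sum_(i <- r) insertion_op k (F i).
Proof. by rewrite /insertion_op raddf_sum !mulr_sumr -big_split. Qed.

Lemma insertion_op_natrM k c p : insertion_op k (c%:R * p) = c%:R * insertion_op k p.
Proof. by rewrite /insertion_op !mulr_natl derivMn !mulrnAr mulrnAC -mulrnDl. Qed.

Lemma insertion_op_subX1_exp m k :
  insertion_op (m + k) (('X - 1) ^+ k) = m%:R * ('X - 1) ^+ k.
Proof.
rewrite /insertion_op deriv_exp derivB derivX derivC subr0 mul1r.
case: k => [|k]; first by rewrite addn0 mulr0n mulr0 addr0.
by rewrite natrD exprS /= -mulr_natr; ring.
Qed.

Lemma sum_Xn_count_sub (c : seq bool) :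
  \sum_(b <- c) 'X^(count id c - b) = insertion_op (size c) 'X^(count id c) :> {poly R}.
Proof.
have sumE K : \sum_(b <- c) ('X^(K - b) : {poly R})
    = (count (predC id) c)%:R * 'X^K + (count id c)%:R * 'X^(K.-1).
  elim: c => [|b c IHc]; first by rewrite big_nil !mul0r addr0.
  by rewrite big_cons IHc; case: b; rewrite /= ?subn0 ?subn1; ring.
rewrite sumE -(count_predC id c) /insertion_op derivXn -mulr_natl.
by case: (count id c) => [|k]; rewrite ?succnK ?exprS; ring.
Qed.

Lemma insertion_op_subX1_expB m n : (m <= n)%N ->
  insertion_op n (('X - 1) ^+ (n - m)) = m%:R * ('X - 1) ^+ (n - m) :> {poly R}.
Proof. by move=> le_mn; rewrite -{1}(subnKC le_mn) insertion_op_subX1_exp. Qed.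

End InsertionOperator.

(** * The right-hand side *)

(* [central_fact n m] is the central factorial number T(2n, 2m), that is, the complete
   homogeneous symmetric polynomial of degree n - m in 1^2, ..., m^2. *)
Fixpoint central_fact (n m : nat) : nat :=
  match n, m with
  | 0, 0 => 1
  | 0, _.+1 | _.+1, 0 => 0
  | n.+1, m.+1 => central_fact n m + m.+1 ^ 2 * central_fact n m.+1
  end.

Lemma central_factSS n m :
  central_fact n.+1 m.+1 = (central_fact n m + m.+1 ^ 2 * central_fact n m.+1)%N.
Proof. by []. Qed.

Lemma central_factS0 n : central_fact n.+1 0 = 0%N.
Proof. by []. Qed.

Lemma central_fact_small n m : (n < m)%N -> central_fact n m = 0%N.
Proof.
by elim: n m => [|n IHn] [|m] //= lt_nm; rewrite !IHn ?muln0 // ltnW.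
Qed.

Lemma central_fact_diag n : central_fact n n = 1%N.
Proof. by elim: n => //= n ->; rewrite central_fact_small ?muln0. Qed.

Arguments central_fact : simpl never.

Section QuadraticProductInverse.
Variables (R : comUnitRingType) (z : R).

Definition quad_prod (m : nat) : {poly R} :=
  \prod_(1 <= k < m.+1) (1 + ((k ^ 2)%:R * z)%:P * 'X^2).

Definition quad_prod_inv (m : nat) : fps R :=
  fun j => if odd j then 0 else (central_fact (m + j./2) m)%:R * (- z) ^+ j./2.

Lemma quad_prod_inv_odd m j : odd j -> quad_prod_inv m j = 0.
Proof. by rewrite /quad_prod_inv => ->. Qed.

Lemma quad_prod_inv_double m j :
  quad_prod_inv m j.*2 = (central_fact (m + j) m)%:R * (- z) ^+ j.
Proof. by rewrite /quad_prod_inv odd_double doubleK. Qed.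

Lemma quad_prod_inv0 m : quad_prod_inv m 0 = 1.
Proof. by rewrite (quad_prod_inv_double m 0) addn0 central_fact_diag mulr1. Qed.

Lemma quad_prod_inv0S j : quad_prod_inv 0 j.+1 = 0.
Proof. by case: j => [|j]; rewrite /quad_prod_inv //= central_factS0 mul0r if_same. Qed.

Lemma quad_prod_inv_lt2 m j : (j < 2)%N -> quad_prod_inv m.+1 j = quad_prod_inv m j.
Proof. by case: j => [|[|]] //; rewrite !quad_prod_inv0. Qed.

Lemma quad_prod_invSS m j :
  quad_prod_inv m j.+2 = quad_prod_inv m.+1 j.+2 + (m.+1 ^ 2)%:R * z * quad_prod_inv m.+1 j.
Proof.
rewrite -[j]odd_double_half; case: (odd j) => /=.
  by rewrite !quad_prod_inv_odd /= ?odd_double // mulr0 addr0.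
rewrite -doubleS !quad_prod_inv_double !addnS addSn central_factSS natrD natrM.
by rewrite exprS; ring.
Qed.

(* Truncating at degree N turns the series product into a product of polynomials, so that
   associativity is available for the induction on m. *)
Lemma quad_prod_inv_mul_trunc m N n : (n <= N)%N ->
  (\poly_(i < N.+1) quad_prod_inv m i * quad_prod m)`_n = (n == 0)%:R.
Proof.
elim: m n => [|m IHm] n le_nN.
  rewrite /quad_prod big_geq // mulr1 coef_poly ltnS le_nN.
  by case: n {le_nN} => [|n]; rewrite ?quad_prod_inv0 ?quad_prod_inv0S.
rewrite /quad_prod big_nat_recr //= -/(quad_prod m) mulrCA mulrC -IHm //.
apply: coefMl_eq => i le_in; have lt_iN : (i < N.+1)%N by rewrite ltnS (leq_trans le_in).
rewrite mulrDr mulr1 mulrCA coefD coefCM coefMXn !coef_poly lt_iN.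
case: ltnP => [lt_i2 | /subnKC <-]; first by rewrite mulr0 addr0 quad_prod_inv_lt2.
by rewrite addKn (leq_ltn_trans (leq_subr 2 i) lt_iN) add2n (quad_prod_invSS m).
Qed.

Lemma fps_inv_quad_prod m : fps_inv (fps_of_poly (quad_prod m)) =1 quad_prod_inv m.
Proof.
apply: fps_inv_unique => [|n].
  by have := quad_prod_inv_mul_trunc m (leq0n 0); rewrite coef0M coef_poly quad_prod_inv0 mul1r.
by rewrite (fps_mul_polyE _ _ (leqnn n)) quad_prod_inv_mul_trunc.
Qed.

End QuadraticProductInverse.

Local Notation y := ('X - 1 : {poly int}).

Definition rhs_coef (a : nat -> nat) (N : nat) : {poly int} :=
  \sum_(m < N) (a m.+1 * central_fact N m.+1)%:R * y ^+ (N - m.+1).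

Definition even_weight (m : nat) : nat := m`! * (m.-1)`!.
Definition odd_weight (m : nat) : nat := (m.-1)`! ^ 2.

Lemma denom_termE c k m n :
  fps_mul (fps_of_poly (c%:P * 'X^k)) (fps_inv (fps_of_poly (denom m))) n
  = if (n < k)%N then 0 else c * quad_prod_inv (1 - 'X) m (n - k)%N.
Proof. by rewrite fps_mul_monomial fps_inv_quad_prod. Qed.

Lemma denom_term_even c k m n j : (k <= n)%N -> (n - k)%N = j.*2 ->
  fps_mul (fps_of_poly (c%:P * 'X^k)) (fps_inv (fps_of_poly (denom m))) n
  = c * (central_fact (m + j) m)%:R * y ^+ j.
Proof.
move=> le_kn nk_j; rewrite denom_termE ltnNge le_kn /= nk_j.
by rewrite quad_prod_inv_double opprB mulrA.
Qed.

Lemma denom_term_odd c k m n : odd (n - k) ->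
  fps_mul (fps_of_poly (c%:P * 'X^k)) (fps_inv (fps_of_poly (denom m))) n = 0.
Proof. by move=> odd_nk; rewrite denom_termE quad_prod_inv_odd // mulr0 if_same. Qed.

Lemma rhs_series_double N : rhs_series N.*2 = rhs_coef even_weight N.
Proof.
rewrite /rhs_series !fps_sum1E [X in _ + X]big1 ?addr0; last first.
  move=> m _; rewrite /term2; case: (ltnP N.*2 (2 * m.+1).-1) => [lt_Nm | le_mN].
    by rewrite denom_termE lt_Nm.
  by rewrite denom_term_odd // oddB // mul2n doubleS /= !odd_double.
rewrite -addnn big_split_ord /= [X in _ + X]big1 ?addr0 => [|m _]; last first.
  by rewrite /term1 denom_termE ifT //; lia.
apply: eq_bigr => m _; rewrite /term1 (@denom_term_even _ _ _ _ (N - m.+1)).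
- by rewrite subnKC // /even_weight !natrM.
- by rewrite addnn mul2n leq_double.
- by rewrite addnn doubleB mul2n.
Qed.

Lemma rhs_series_doubleS N : rhs_series N.*2.+1 = rhs_coef odd_weight N.+1.
Proof.
rewrite /rhs_series !fps_sum1E [X in X + _]big1 ?add0r; last first.
  move=> m _; rewrite /term1; case: (ltnP N.*2.+1 (2 * m.+1)) => [lt_Nm | le_mN].
    by rewrite denom_termE lt_Nm.
  by rewrite denom_term_odd // oddB // mul2n doubleS /= !odd_double.
have -> : N.*2.+1 = (N.+1 + N)%N by rewrite -addnn addSn.
rewrite big_split_ord /= [X in _ + X]big1 ?addr0 => [|m _]; last first.
  by rewrite /term2 denom_termE ifT //; lia.
apply: eq_bigr => m _; rewrite /term2 (@denom_term_even _ _ _ _ (N.+1 - m.+1)).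
- by rewrite subnKC // /odd_weight !natrM.
- by move: (ltn_ord m); lia.
- by move: (ltn_ord m); lia.
Qed.

Lemma even_weightE m : even_weight m.+1 = (m.+1 * odd_weight m.+1)%N.
Proof. by rewrite /even_weight /odd_weight factS /=; ring. Qed.

Lemma odd_weightS m : odd_weight m.+2 = (m.+1 ^ 2 * odd_weight m.+1)%N.
Proof. by rewrite /odd_weight /= factS expnMn. Qed.

Lemma rhs_coef_even N : rhs_coef even_weight N.+1 = insertion_op N.+1 (rhs_coef odd_weight N.+1).
Proof.
rewrite /rhs_coef insertion_op_sum; apply: eq_bigr => m _.
rewrite insertion_op_natrM insertion_op_subX1_expB // mulrA -natrM.
by rewrite even_weightE [in RHS]mulnC mulnA.
Qed.

Lemma rhs_coef_odd N :
  rhs_coef odd_weight N.+2 = 'X * insertion_op N.+1 (rhs_coef even_weight N.+1).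
Proof.
rewrite /rhs_coef insertion_op_sum mulr_sumr.
under eq_bigr do rewrite central_factSS mulnDr natrD mulrDl.
rewrite big_split /= big_ord_recl central_factS0 muln0 mul0r add0r.
rewrite [X in _ + X]big_ord_recr /= central_fact_small // !muln0 mul0r addr0.
rewrite -big_split /=; apply: eq_bigr => m _; rewrite /bump add1n.
have le_mN : (m <= N)%N by rewrite -ltnS.
rewrite insertion_op_natrM insertion_op_subX1_expB // !subSS subSn //.
rewrite odd_weightS even_weightE !natrM exprS; ring.
Qed.

Lemma rhs_series_rec n : (0 < n)%N ->
  rhs_series n.+1 = 'X^(odd n.+1) * insertion_op (uphalf n) (rhs_series n).
Proof.
rewrite -[n]odd_double_half; case: (odd n) => n_gt0; rewrite ?add1n ?add0n.
  rewrite -doubleS rhs_series_double rhs_series_doubleS rhs_coef_even /=.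
  by rewrite negbK odd_double doubleK mul1r.
case: n./2 n_gt0 => // k _.
by rewrite rhs_series_doubleS rhs_series_double rhs_coef_odd oddS odd_double uphalf_double expr1.
Qed.

Lemma rhs_series1 : rhs_series 1 = 1.
Proof.
by rewrite (rhs_series_doubleS 0) /rhs_coef big_ord1 central_fact_diag subnn !expr0 mulr1.
Qed.

(** * The left-hand side *)

Section SeqInsertion.
Variable T : eqType.
Implicit Types (s t : seq T) (x : T).

Definition insert_at s i x := take i s ++ x :: drop i s.
Definition remove_at t i := take i t ++ drop i.+1 t.

Lemma size_insert_at s i x : size (insert_at s i x) = (size s).+1.
Proof. by rewrite /insert_at size_cat /= addnS -size_cat cat_take_drop. Qed.

Lemma perm_insert_at s i x : perm_eq (insert_at s i x) (x :: s).
Proof. by rewrite /insert_at -cat1s perm_catCA /= perm_cons cat_take_drop. Qed.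

Lemma head_insert_at x0 s i x : (0 < i)%N -> s != [::] -> head x0 (insert_at s i x) = head x0 s.
Proof. by case: s => // y s; case: i. Qed.

Lemma head_remove_at x0 t i : (0 < i)%N -> head x0 (remove_at t i) = head x0 t.
Proof. by case: t => // y t; case: i. Qed.

Lemma index_insert_at s i x : x \notin s -> (i <= size s)%N -> index x (insert_at s i x) = i.
Proof.
move=> s'x le_is; rewrite /insert_at index_cat ifN; last exact: contra (@mem_take _ _ _ _) s'x.
by rewrite /= eqxx addn0 size_takel.
Qed.

Lemma insert_atK s i x : (i <= size s)%N -> remove_at (insert_at s i x) i = s.
Proof.
move=> le_is; have size_take_i : size (take i s) = i by rewrite size_takel.
rewrite /remove_at /insert_at take_size_cat // -cat_rcons drop_size_cat ?cat_take_drop //.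
by rewrite size_rcons size_take_i.
Qed.

Lemma remove_atK x0 t i : (i < size t)%N -> insert_at (remove_at t i) i (nth x0 t i) = t.
Proof.
move=> lt_it; have size_take_i : size (take i t) = i by rewrite size_takel // ltnW.
by rewrite /insert_at /remove_at take_size_cat // drop_size_cat // -drop_nth // cat_take_drop.
Qed.

Lemma insert_at_inj s1 s2 i1 i2 x : x \notin s1 -> x \notin s2 ->
  (i1 <= size s1)%N -> (i2 <= size s2)%N ->
  insert_at s1 i1 x = insert_at s2 i2 x -> s1 = s2 /\ i1 = i2.
Proof.
move=> s1'x s2'x le1 le2 eq12.
have eq_i : i1 = i2 by rewrite -(index_insert_at s1'x le1) eq12 index_insert_at.
by split=> //; rewrite -(insert_atK x le1) eq12 eq_i insert_atK.
Qed.

Lemma rot_insert_at s i x : (i <= size s)%N -> rot i.+1 (insert_at s i x) = rcons (rot i s) x.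
Proof.
move=> le_is; have size_i : size (rcons (take i s) x) = i.+1 by rewrite size_rcons size_takel.
by rewrite /insert_at -cat_rcons -[i.+1]size_i rot_size_cat /rot rcons_cat.
Qed.

Lemma last_rot x0 s i : (0 < i <= size s)%N -> last x0 (rot i s) = nth x0 s i.-1.
Proof. by case: i => // i /= lt_is; rewrite /rot last_cat (take_nth x0 lt_is) last_rcons. Qed.

End SeqInsertion.

Lemma zip_rot1 (S T : Type) (a : seq S) (b : seq T) :
  size a = size b -> zip (rot 1 a) (rot 1 b) = rot 1 (zip a b).
Proof. by case: a b => [|x a] [|y b] // [eq_ab]; rewrite !rot1_cons zip_rcons. Qed.

Lemma count_odd_iota1 m : count odd (iota 1 m) = uphalf m.
Proof.
elim: m => // m IHm; rewrite -[m.+1]addn1 iotaD count_cat IHm /= addn0 add0n addn1.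
by rewrite [uphalf m.+1]uphalf_half /= addnC.
Qed.

Lemma perm_iotaS m : perm_eq (iota 1 m.+1) (m.+1 :: iota 1 m).
Proof. by rewrite perm_sym -cat1s perm_catC -[[:: m.+1]]/(iota (1 + m) 1) -iotaD addn1. Qed.

Definition drop_ok (p : nat * nat) : bool := (p.2 < p.1)%N ==> odd p.2.
Definition oo_drop (p : nat * nat) : bool := [&& p.2 < p.1, odd p.1 & odd p.2]%N.

Lemma in_CoE s : in_Co s = all drop_ok (cyc_pairs s).
Proof. by rewrite /in_Co /drops all_filter. Qed.

Lemma drop_ooE s : drop_oo s = count oo_drop (cyc_pairs s).
Proof. by rewrite /drop_oo /drops count_filter; apply: eq_count => -[a b]; rewrite /= andbC. Qed.

Lemma size_cyc_pairs s : size (cyc_pairs s) = size s.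
Proof. by rewrite /cyc_pairs size_zip size_rot minnn. Qed.

Lemma cyc_pairs_cons x w : cyc_pairs (x :: w) = rcons (zip (belast x w) w) (last x w, x).
Proof. by rewrite /cyc_pairs rot1_cons [x :: w]lastI zip_rcons ?size_belast. Qed.

Lemma cyc_pairs_rot1 s : cyc_pairs (rot 1 s) = rot 1 (cyc_pairs s).
Proof. by rewrite /cyc_pairs zip_rot1 // size_rot. Qed.

Lemma cyc_pairs_rot k s : (k <= size s)%N -> cyc_pairs (rot k s) = rot k (cyc_pairs s).
Proof.
elim: k => [|k IHk] lt_ks; first by rewrite !rot0.
by rewrite rotS // cyc_pairs_rot1 (IHk (ltnW lt_ks)) -rotS // size_cyc_pairs.
Qed.

Lemma cyc_pairs_rcons x w n :
  cyc_pairs (rcons (x :: w) n) = rcons (rcons (zip (belast x w) w) (last x w, n)) (n, x).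
Proof.
rewrite rcons_cons cyc_pairs_cons belast_rcons last_rcons.
by rewrite [x :: w]lastI zip_rcons ?size_belast.
Qed.

Lemma perm_cyc_pairs_insert s i n (p := nth (0, 0)%N (cyc_pairs s) i.-1) :
  (0 < i <= size s)%N -> exists2 r, perm_eq (cyc_pairs s) (p :: r)
    & perm_eq (cyc_pairs (insert_at s i n)) ((p.1, n) :: (n, p.2) :: r).
Proof.
move=> /andP[i_gt0 le_is].
case rot_s: (rot i s) => [|x w].
  by move: le_is; rewrite -(size_rot i s) rot_s leqn0 => /eqP i0; rewrite i0 in i_gt0.
have p_last : p = (last x w, x).
  rewrite /p -last_rot ?size_cyc_pairs ?i_gt0 // -cyc_pairs_rot // rot_s.
  by rewrite cyc_pairs_cons last_rcons.
exists (zip (belast x w) w).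
  by rewrite -(perm_rot i) -cyc_pairs_rot // rot_s cyc_pairs_cons p_last perm_rcons.
rewrite -(perm_rot i.+1) -cyc_pairs_rot ?size_insert_at // rot_insert_at // rot_s.
by rewrite cyc_pairs_rcons p_last -!cats1 -catA perm_catC.
Qed.

Definition cycle_weight (s : seq nat) : {poly int} := if in_Co s then 'X^(drop_oo s) else 0.

Lemma mem_cyc_pairs s p : p \in cyc_pairs s -> (p.1 \in s) && (p.2 \in s).
Proof.
case/(nthP (0, 0)%N) => j; rewrite size_cyc_pairs => lt_js <-.
by rewrite /cyc_pairs nth_zip ?size_rot //= mem_nth // -(mem_rot 1) mem_nth ?size_rot.
Qed.

Lemma cycle_weight_insert s i n (p := nth (0, 0)%N (cyc_pairs s) i.-1) :
  all (fun a => a < n)%N s -> (0 < i <= size s)%N ->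
  cycle_weight (insert_at s i n)
  = if odd p.2 && in_Co s then 'X^(odd n + (drop_oo s - oo_drop p)) else 0.
Proof.
move=> /allP lt_sn le_i; have [r perm_s perm_ins] := perm_cyc_pairs_insert n le_i.
have /andP[/lt_sn p1n /lt_sn p2n] : (p.1 \in s) && (p.2 \in s).
  apply/mem_cyc_pairs/mem_nth; rewrite size_cyc_pairs.
  by case/andP: le_i => i_gt0; apply: leq_trans; rewrite prednK.
rewrite -/p in perm_s perm_ins; clearbody p.
rewrite /cycle_weight !in_CoE !drop_ooE (perm_all _ perm_ins) (permP perm_ins).
rewrite (perm_all _ perm_s) (permP perm_s) /= /drop_ok /oo_drop /= p2n ltnNge (ltnW p1n) /=.
by case: (odd p.2); rewrite //= implybT andbT addKn.
Qed.

Lemma count_odd_cyc_pairs s : count (fun p => odd p.2) (cyc_pairs s) = count odd s.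
Proof.
rewrite -(count_map snd odd) /cyc_pairs -/(unzip2 _) unzip2_zip ?size_rot //.
have rot_s : perm_eq (rot 1 s) s by rewrite perm_rot.
by apply/permP.
Qed.

Lemma sum_cycle_weight_insert s m : perm_eq s (iota 1 m) ->
  \sum_(i <- iota 1 m) cycle_weight (insert_at s i m.+1)
  = 'X^(odd m.+1) * insertion_op (uphalf m) (cycle_weight s).
Proof.
move=> perm_s; have size_s : size s = m by rewrite (perm_size perm_s) size_iota.
have lt_s : all (fun a => a < m.+1)%N s.
  by apply/allP => a; rewrite (perm_mem perm_s) mem_iota add1n ltnS => /andP[].
pose F p := if odd p.2 && in_Co s then 'X^(odd m.+1 + (drop_oo s - oo_drop p)) else 0 : {poly int}.
rewrite (eq_big_seq (fun i => F (nth (0, 0)%N (cyc_pairs s) i.-1))); last first.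
  by move=> i; rewrite mem_iota add1n ltnS => le_i; rewrite cycle_weight_insert // size_s.
have -> : \sum_(i <- iota 1 m) F (nth (0, 0)%N (cyc_pairs s) i.-1) = \sum_(p <- cyc_pairs s) F p.
  by rewrite (big_nth (0, 0)%N) size_cyc_pairs size_s /index_iota subn0 (iotaDl 1 0) big_map.
rewrite /F /cycle_weight; case: (in_Co s); last first.
  by rewrite big1 => [|p _]; rewrite ?andbF // /insertion_op deriv0 !mulr0 addr0 mulr0.
rewrite -big_mkcond; under eq_bigr do rewrite exprD; rewrite -mulr_sumr; congr (_ * _).
(* One entry per gap before an odd entry: was the pair broken there an odd-odd drop? *)
set c := [seq oo_drop p | p <- cyc_pairs s & odd p.2].
have drop_ooc : drop_oo s = count id c.
  rewrite count_map count_filter drop_ooE; apply: eq_count => -[a b].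
  by rewrite /oo_drop /=; case: (odd b); rewrite ?andbT ?andbF.
have uphalfc : uphalf m = size c.
  by rewrite size_map size_filter count_odd_cyc_pairs (permP perm_s) count_odd_iota1.
rewrite drop_ooc uphalfc -sum_Xn_count_sub big_map big_filter.
by apply: eq_bigl => p; rewrite andbT.
Qed.

Lemma mem_cycles n t : (t \in cycles n) = perm_eq t (iota 1 n) && (head 0%N t == 1%N).
Proof. by rewrite mem_filter mem_permutations andbC. Qed.

Lemma uniq_cycles n : uniq (cycles n).
Proof. exact/filter_uniq/permutations_uniq. Qed.

Lemma max_notin_cycles m s : s \in cycles m -> m.+1 \notin s.
Proof. by rewrite mem_cycles => /andP[/perm_mem-> _]; rewrite mem_iota ltnn andbF. Qed.

Lemma size_cycles m s : s \in cycles m -> size s = m.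
Proof. by rewrite mem_cycles => /andP[/perm_size-> _]; rewrite size_iota. Qed.

Lemma insert_at_cycles m s i : s \in cycles m -> i \in iota 1 m ->
  insert_at s i m.+1 \in cycles m.+1.
Proof.
move=> s_cyc; rewrite mem_iota add1n ltnS => /andP[i_gt0 le_im].
have s_nil : s != [::] by rewrite -size_eq0 (size_cycles s_cyc) -lt0n (leq_trans i_gt0).
move: s_cyc; rewrite !mem_cycles head_insert_at // => /andP[perm_s ->]; rewrite andbT.
apply: perm_trans (perm_insert_at _ _ _) _.
by rewrite perm_sym (permPl (perm_iotaS m)) perm_cons perm_sym.
Qed.

Lemma cycles_remove_max m t : (0 < m)%N -> t \in cycles m.+1 ->
  exists s i, [/\ s \in cycles m, i \in iota 1 m & t = insert_at s i m.+1].
Proof.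
move=> m_gt0 t_cyc; move: (t_cyc); rewrite mem_cycles => /andP[perm_t /eqP head_t].
have t_max : m.+1 \in t by rewrite (perm_mem perm_t) mem_iota add1n ltnS leqnn.
set i := index m.+1 t; have nth_i : nth 0%N t i = m.+1 := nth_index 0%N t_max.
have lt_it : (i < size t)%N by rewrite index_mem.
have i_gt0 : (0 < i)%N.
  by rewrite lt0n; apply: contraTneq m_gt0 => i0; rewrite -[m]/(m.+1.-1) -nth_i i0 nth0 head_t.
exists (remove_at t i), i; split; last by rewrite -nth_i remove_atK.
- rewrite mem_cycles head_remove_at // head_t eqxx andbT -(perm_cons m.+1).
  by rewrite -(permPr (perm_iotaS m)) -{1}nth_i -(permPl (perm_insert_at _ i _)) remove_atK.
- by rewrite mem_iota add1n i_gt0 -ltnS -(size_cycles t_cyc).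
Qed.

Lemma perm_cycles_insert m : (0 < m)%N ->
  perm_eq (cycles m.+1) [seq insert_at s i m.+1 | s <- cycles m, i <- iota 1 m].
Proof.
move=> m_gt0; apply: uniq_perm; first exact: uniq_cycles.
  apply: allpairs_uniq; [exact: uniq_cycles | exact: iota_uniq |].
  move=> [s1 i1] [s2 i2] /allpairsP[[a b] [/= s1_cyc i1m [-> ->]]].
  move=> /allpairsP[[c d] [/= s2_cyc i2m [-> ->]]] /= eq12.
  move: i1m; rewrite mem_iota add1n ltnS -(size_cycles s1_cyc) => /andP[_ le1].
  move: i2m; rewrite mem_iota add1n ltnS -(size_cycles s2_cyc) => /andP[_ le2].
  by have [-> ->] := insert_at_inj (max_notin_cycles s1_cyc) (max_notin_cycles s2_cyc) le1 le2 eq12.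
move=> t; apply/idP/allpairsP => [t_cyc | [[s i] [/= s_cyc im ->]]]; last exact: insert_at_cycles.
by have [s [i [s_cyc im ->]]] := cycles_remove_max m_gt0 t_cyc; exists (s, i).
Qed.

Lemma lhs_seriesE n : (0 < n)%N -> lhs_series n = \sum_(s <- cycles n) cycle_weight s.
Proof. by move=> n_gt0; rewrite /lhs_series n_gt0 big_mkcond. Qed.

Lemma lhs_series1 : lhs_series 1 = 1.
Proof. by rewrite lhs_seriesE // /cycles /= big_seq1. Qed.

Lemma lhs_series_rec m : (0 < m)%N ->
  lhs_series m.+1 = 'X^(odd m.+1) * insertion_op (uphalf m) (lhs_series m).
Proof.
move=> m_gt0; rewrite !lhs_seriesE // (perm_big _ (perm_cycles_insert m_gt0)) big_allpairs_dep.
rewrite insertion_op_sum mulr_sumr; apply: eq_big_seq => s.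
by rewrite mem_cycles => /andP[perm_s _]; rewrite sum_cycle_weight_insert.
Qed.

Theorem theorem1p2 : forall n : nat, lhs_series n = rhs_series n.
Proof.
elim=> [|[|n] IHn]; first by rewrite /rhs_series !fps_sum1E !big_ord0 addr0.
  by rewrite lhs_series1 rhs_series1.
by rewrite lhs_series_rec // rhs_series_rec // IHn.
Qed.
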